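(* Let $G$ be an esp-digraph. Then $\chi'_o(G)\le 7$.
   Context: An oriented $r$-arc-coloring of a digraph $G=(V,E)$ (parallel arcs allowed; the definition applies verbatim) is a map $c:E\to\{1,\dots,r\}$ such that (i) $c((u,v))\ne c((v,w))$ for every two arcs $(u,v),(v,w)\in E$, and (ii) $c((u,v))\ne c((y,z))$ for all arcs $(u,v),(v,w),(x,y),(y,z)\in E$ with $c((v,w))=c((x,y))$. The oriented chromatic index $\chi'_o(G)$ is the smallest $r$ for which such a coloring exists. Edge series-parallel (multi)digraphs (esp-digraphs) are defined recursively, each with a distinguished source and sink: (i) a digraph with two distinct vertices $u,v$ and the single arc $(u,v)$ is an esp-digraph with source $u$ and sink $v$; (ii) if $G_1,G_2$ are vertex-disjoint esp-digraphs, then the parallel composition $G_1\cup G_2$ (identify the source of $G_1$ with the source of $G_2$ and the sink of $G_1$ with the sink of $G_2$; arcs are united, possibly creating parallel arcs) is an esp-digraph with these identified source and sink, and the series composition $G_1\times G_2$ (identify the sink of $G_1$ with the source of $G_2$) is an esp-digraph with source the source of $G_1$ and sink the sink of $G_2$. *)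

From mathcomp Require Import all_boot.
Set Implicit Arguments. Unset Strict Implicit. Unset Printing Implicit Defensive.

(* A multidigraph is represented by its list of arcs [E : seq (nat * nat)];
   vertices are natural numbers, parallel arcs are repeated entries, and an
   arc is identified by its index in [E]. The vertex set of an esp-digraph is
   the set of endpoints of its arcs (esp-digraphs have no isolated vertices). *)
Definition arcs := seq (nat * nat).

Definition vertex_of (E : arcs) (v : nat) : bool :=
  has (fun a => (a.1 == v) || (a.2 == v)) E.

(* Vertex-disjointness of the components before identification is
   expressed (up to renaming) by requiring that the two arc lists share no
   vertex other than the identified ones. *)
Inductive esp : arcs -> nat -> nat -> Prop :=
| esp_arc u v : u <> v -> esp [:: (u, v)] u v
| esp_par E1 E2 s t : esp E1 s t -> esp E2 s t ->
    (forall x, vertex_of E1 x -> vertex_of E2 x -> x = s \/ x = t) ->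
    esp (E1 ++ E2) s t
| esp_ser E1 E2 s m t : esp E1 s m -> esp E2 m t ->
    (forall x, vertex_of E1 x -> vertex_of E2 x -> x = m) ->
    esp (E1 ++ E2) s t.

Definition arc0 : nat * nat := (0, 0).

Definition oriented_arc_coloring (E : arcs) (r : nat) (c : nat -> nat) : Prop :=
  (forall i, i < size E -> 1 <= c i <= r) /\
  (forall i j, i < size E -> j < size E ->
     (nth arc0 E i).2 = (nth arc0 E j).1 -> c i <> c j) /\
  (forall i j k l, i < size E -> j < size E -> k < size E -> l < size E ->
     (nth arc0 E i).2 = (nth arc0 E j).1 ->
     (nth arc0 E k).2 = (nth arc0 E l).1 ->
     c j = c k -> c i <> c l).

Definition has_oriented_coloring (E : arcs) (r : nat) : Prop :=
  exists c, oriented_arc_coloring E r c.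

Definition oriented_chromatic_index_le (E : arcs) (r : nat) : Prop :=
  exists r', r' <= r /\ has_oriented_coloring E r'.

From mathcomp Require Import all_boot.
Set Implicit Arguments. Unset Strict Implicit. Unset Printing Implicit Defensive.

(* An oriented r-arc-coloring is the same as a homomorphism of the line digraph
   into an oriented graph on r vertices; we map into the Paley tournament QR_7
   on Z/7 (x -> y iff y - x is a nonzero square). Every arc x -> y of QR_7 lies
   on a directed 2-path x -> w -> y, which is what a series composition needs:
   by induction on the esp-structure, for every arc u -> v of QR_7 there is a
   homomorphism sending the out-arcs of the source into the out-neighbourhood
   of u and all in-arcs of the sink to v. Parallel composition glues two such
   homomorphisms for the same (u, v); series composition glues those for
   (u, w) and (w, v). *)

Lemma vertex_of_cat E1 E2 x :
  vertex_of (E1 ++ E2) x = vertex_of E1 x || vertex_of E2 x.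
Proof. by rewrite /vertex_of has_cat. Qed.

Lemma vertex_of_tail E i : i < size E -> vertex_of E (nth arc0 E i).1.
Proof.
by move=> hi; apply/hasP; exists (nth arc0 E i); rewrite ?mem_nth ?eqxx.
Qed.

Lemma vertex_of_head E i : i < size E -> vertex_of E (nth arc0 E i).2.
Proof.
by move=> hi; apply/hasP; exists (nth arc0 E i); rewrite ?mem_nth ?eqxx ?orbT.
Qed.

Lemma esp_terminals E s t : esp E s t ->
  [/\ s <> t, vertex_of E s, vertex_of E t &
      forall i, i < size E -> (nth arc0 E i).2 <> s /\ (nth arc0 E i).1 <> t].
Proof.
elim=> {E s t} [u v huv | E1 E2 s t _ [st1 s1 t1 ends1] _ [_ _ _ ends2] _
               | E1 E2 s m t _ [sm s1 m1 ends1] _ [mt m2 t2 ends2] disj].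
- by split=> //=; rewrite ?eqxx ?orbT //; case=> //= _; split=> e; apply: huv.
- split; rewrite ?vertex_of_cat ?s1 ?t1 // => i.
  rewrite size_cat nth_cat; case: (ltnP i (size E1)) => [hi _ | hi].
    exact: ends1.
  by rewrite -ltn_subLR //; apply: ends2.
- have in_m x : vertex_of E1 x -> vertex_of E2 x -> x = m := disj x.
  split; rewrite ?vertex_of_cat ?s1 ?t2 ?orbT //.
    by move=> est; apply: sm; apply: in_m; rewrite // est.
  move=> i; rewrite size_cat nth_cat; case: (ltnP i (size E1)) => [hi _ | hi].
    split; first by case: (ends1 i hi).
    by move=> e; apply: mt; apply/esym/in_m => //; rewrite -e vertex_of_tail.
  rewrite -ltn_subLR // => hk; split; last by case: (ends2 _ hk).
  by move=> e; apply: sm; apply: in_m => //; rewrite -e vertex_of_head.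
Qed.

Lemma esp_par_head_tail E1 E2 s t i j :
  esp E1 s t -> esp E2 s t ->
  (forall x, vertex_of E1 x -> vertex_of E2 x -> x = s \/ x = t) ->
  i < size E1 -> j < size E2 -> (nth arc0 E1 i).2 <> (nth arc0 E2 j).1.
Proof.
move=> /esp_terminals [_ _ _ ends1] /esp_terminals [_ _ _ ends2] disj hi hj e.
have := disj _ (vertex_of_head hi); rewrite e => /(_ (vertex_of_tail hj)).
by case=> x; [case: (ends1 i hi); rewrite e | case: (ends2 j hj)].
Qed.

Section LineHomomorphisms.

Variables (V : Type) (T : rel V).

Definition line_hom (E : arcs) (c : nat -> V) : Prop :=
  forall i j, i < size E -> j < size E ->
    (nth arc0 E i).2 = (nth arc0 E j).1 -> T (c i) (c j).

Definition cat_col (n : nat) (c1 c2 : nat -> V) (i : nat) : V :=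
  if i < n then c1 i else c2 (i - n).

Variant cat_index_spec (E1 E2 : arcs) (c1 c2 : nat -> V) (i : nat) : Prop :=
  | CatL of i < size E1 & nth arc0 (E1 ++ E2) i = nth arc0 E1 i
         & cat_col (size E1) c1 c2 i = c1 i
  | CatR k of k < size E2 & nth arc0 (E1 ++ E2) i = nth arc0 E2 k
         & cat_col (size E1) c1 c2 i = c2 k.

Lemma cat_indexP E1 E2 c1 c2 i :
  i < size (E1 ++ E2) -> cat_index_spec E1 E2 c1 c2 i.
Proof.
rewrite size_cat; case: (ltnP i (size E1)) => [hi _ | hi hk].
  by apply: CatL; rewrite /cat_col ?nth_cat hi.
have hi' : (i < size E1) = false by rewrite ltnNge hi.
apply: (CatR (k := i - size E1)); rewrite ?ltn_subLR //.
  by rewrite nth_cat hi'.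
by rewrite /cat_col hi'.
Qed.

Lemma line_hom_cat E1 E2 c1 c2 :
  line_hom E1 c1 -> line_hom E2 c2 ->
  (forall i j, i < size E1 -> j < size E2 ->
     (nth arc0 E1 i).2 = (nth arc0 E2 j).1 -> T (c1 i) (c2 j)) ->
  (forall i j, i < size E2 -> j < size E1 ->
     (nth arc0 E2 i).2 = (nth arc0 E1 j).1 -> T (c2 i) (c1 j)) ->
  line_hom (E1 ++ E2) (cat_col (size E1) c1 c2).
Proof.
move=> hom1 hom2 cross12 cross21 i j.
case/(cat_indexP c1 c2)=> [hi -> -> | k hk -> ->];
  case/(cat_indexP c1 c2)=> [hj -> -> | l hl -> ->].
- exact: hom1.
- exact: cross12.
- exact: cross21.
- exact: hom2.
Qed.

Definition rooted_line_hom (E : arcs) (s t : nat) (u v : V) (c : nat -> V) :=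
  [/\ line_hom E c,
      forall i, i < size E -> (nth arc0 E i).1 = s -> T u (c i) &
      forall i, i < size E -> (nth arc0 E i).2 = t -> c i = v].

Hypothesis T_path2 : forall u v, T u v -> exists2 w, T u w & T w v.

Lemma esp_rooted_line_hom E s t : esp E s t ->
  forall u v, T u v -> exists c, rooted_line_hom E s t u v c.
Proof.
elim=> {E s t} [a b ab u v uv | E1 E2 s t esp1 IH1 esp2 IH2 disj u v uv
                             | E1 E2 s m t esp1 IH1 esp2 IH2 disj u v uv].
- exists (fun _ => v); split=> // [[|[|]]] // [|[|]] //= _ _ ba.
  by case: ab; rewrite ba.
- have [c1 [hom1 src1 snk1]] := IH1 u v uv.
  have [c2 [hom2 src2 snk2]] := IH2 u v uv.
  exists (cat_col (size E1) c1 c2); split.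
  + apply: line_hom_cat => // i j hi hj e; exfalso.
      exact: esp_par_head_tail esp1 esp2 disj hi hj e.
    exact: esp_par_head_tail esp2 esp1 (fun x x2 x1 => disj x x1 x2) hi hj e.
  + by move=> i /(cat_indexP c1 c2) [hi -> -> | k hk -> ->]; [exact: src1 |
      exact: src2].
  + by move=> i /(cat_indexP c1 c2) [hi -> -> | k hk -> ->]; [exact: snk1 |
      exact: snk2].
- have [sm s1 _ _] := esp_terminals esp1.
  have [mt _ t2 ends2] := esp_terminals esp2.
  have [w uw wv] := T_path2 uv.
  have [c1 [hom1 src1 snk1]] := IH1 u w uw.
  have [c2 [hom2 src2 snk2]] := IH2 w v wv.
  have in_m x : vertex_of E1 x -> vertex_of E2 x -> x = m := disj x.
  exists (cat_col (size E1) c1 c2); split.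
  + apply: line_hom_cat => // i j hi hj e.
      have ehm : (nth arc0 E1 i).2 = m.
        apply: in_m; first exact: vertex_of_head.
        by rewrite e; exact: vertex_of_tail.
      by rewrite (snk1 i hi ehm); apply: src2; rewrite // -e.
    have ehm : (nth arc0 E2 i).2 = m.
      apply: in_m; last exact: vertex_of_head.
      by rewrite e; exact: vertex_of_tail.
    by case: (ends2 i hi).
  + move=> i /(cat_indexP c1 c2) [hi -> -> | k hk -> ->]; first exact: src1.
    by move=> e; case: sm; apply: in_m; rewrite // -e vertex_of_tail.
  + move=> i /(cat_indexP c1 c2) [hi -> -> | k hk -> ->]; last exact: snk2.
    by move=> e; case: mt; symmetry; apply: in_m; rewrite // -e vertex_of_head.
Qed.

End LineHomomorphisms.

Lemma oriented_coloring_of_line_hom (V : finType) (T : rel V) E c :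
  irreflexive T -> (forall x y, T x y -> ~~ T y x) -> line_hom T E c ->
  oriented_arc_coloring E #|V| (fun i => (enum_rank (c i)).+1).
Proof.
move=> Tirr Tasym hom; split; [|split].
- by move=> i _; rewrite ltn_ord.
- move=> i j hi hj e [] /val_inj/enum_rank_inj eij.
  by move: (hom i j hi hj e); rewrite eij Tirr.
- move=> i j k l hi hj hk hl eij ekl [] /val_inj/enum_rank_inj ejk.
  case=> /val_inj/enum_rank_inj eil.
  by move: (Tasym _ _ (hom i j hi hj eij)); rewrite ejk eil hom.
Qed.

(* The [+ 7] guards against truncated subtraction. *)
Definition qr7 : rel 'I_7 := fun x y => (y + 7 - x) %% 7 \in [:: 1; 2; 4].

Lemma qr7_irr : irreflexive qr7.
Proof. by case; do 7?case. Qed.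

Lemma qr7_asym x y : qr7 x y -> ~~ qr7 y x.
Proof. by case: x; do 7?case=> //; case: y; do 7?case. Qed.

(* The middle vertex is the midpoint (x + y) / 2 = 4 (x + y) in Z/7. *)
Lemma qr7_path2 x y : qr7 x y -> exists2 w, qr7 x w & qr7 w y.
Proof.
move=> xy; exists (inord ((x + y) * 4 %% 7)); move: xy; rewrite /qr7 inordK
  ?ltn_mod //; by case: x; do 7?case=> //; case: y; do 7?case.
Qed.

Theorem mainTheorem6 (E : arcs) (s t : nat) :
  esp E s t -> oriented_chromatic_index_le E 7.
Proof.
move=> espE.
have [c [hom _ _]] :=
  esp_rooted_line_hom qr7_path2 espE (u := ord_max) (v := ord0) isT.
exists #|'I_7|; split; first by rewrite card_ord.
exists (fun i => (enum_rank (c i)).+1).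
exact: oriented_coloring_of_line_hom qr7_irr qr7_asym hom.
Qed.
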